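(* Let $n\in\mathbb{N}$, $p_1,\ldots,p_n\in\mathbb{H}$ with $p_n\neq0$, $d_0\in\{0,1\}$, and $p(x)=p_nx^n+\cdots+p_1x+d_0$. For a real variable $t$, write $p(t)=g(t)\big(g_1(t)+g_2(t)\mathbf{j}\big)$ with $g,g_1,g_2\in\mathbb{C}[t]$ and $\gcd(g_1,g_2)=1$, and let $\tilde g(t)=g_1(t)\bar g_1(t)+g_2(t)\bar g_2(t)$, where $\bar h$ denotes the polynomial obtained from $h\in\mathbb{C}[t]$ by conjugating its coefficients. Write the set of distinct complex roots of $g$ as $$\{\xi_1,\ldots,\xi_s;\ \lambda_1,\overline{\lambda_1},\ldots,\lambda_t,\overline{\lambda_t};\ \eta_1,\ldots,\eta_{k_1}\},$$ where $\xi_1,\ldots,\xi_s$ are real, the $\lambda_i,\overline{\lambda_i}$ are the nonreal roots of $g$ whose conjugates are also roots of $g$, and $\eta_1,\ldots,\eta_{k_1}$ are the remaining (nonreal) roots of $g$. Write the set of distinct complex roots of $\tilde g$ as $\{\eta_{k_1+1},\overline{\eta_{k_1+1}},\ldots,\eta_k,\overline{\eta_k}\}$, where from this list one deletes each pair $\eta_i,\overline{\eta_i}$ for which $\eta_i$ or $\overline{\eta_i}$ is a root of $g$ (so that after deletion $\eta_1,\ldots,\eta_k,\overline{\eta_{k_1+1}},\ldots,\overline{\eta_k},\lambda_1,\overline{\lambda_1},\ldots,\lambda_t,\overline{\lambda_t}$ are distinct nonreal complex numbers). Then the set of zeros of $p(x)$ in $\mathbb{H}$ is $$\{\xi_1,\ldots,\xi_s;\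 \omega_1,\ldots,\omega_k\}\ \dot\cup\ \dot{\bigcup_{i=1}^{t}}[\lambda_i],$$ where $$\omega_i=\frac{1}{|g_1(\overline{\eta_i})|^2+|g_2(\overline{\eta_i})|^2}\Big\{|g_2(\overline{\eta_i})|^2\overline{\eta_i}+|g_1(\overline{\eta_i})|^2\eta_i+2g_2(\overline{\eta_i})\overline{g_1(\overline{\eta_i})}(\operatorname{Im}\eta_i)\mathbf{k}\Big\}.$$
   Context: $\mathbb{H}$ denotes the real quaternions with units $\mathbf{i},\mathbf{j},\mathbf{k}$ ($\mathbf{i}^2=\mathbf{j}^2=\mathbf{k}^2=-1$, $\mathbf{ij}=-\mathbf{ji}=\mathbf{k}$), and $\mathbb{C}=\mathbb{R}\oplus\mathbb{R}\mathbf{i}\subset\mathbb{H}$. Evaluating $p$ at a real $t$ and writing each coefficient $p_i=a_i+b_i\mathbf{j}$ ($a_i,b_i\in\mathbb{C}$) gives $p(t)=f_1(t)+f_2(t)\mathbf{j}$ with $f_1,f_2\in\mathbb{C}[t]$; the factorization $p(t)=g(t)(g_1(t)+g_2(t)\mathbf{j})$ means $f_1=gg_1$, $f_2=gg_2$. For $q\in\mathbb{H}$, $[q]=\{aqa^{-1}:a\in\mathbb{H},a\neq0\}$. $|z|$ and $\operatorname{Im}z$ denote modulus and imaginary part of $z\in\mathbb{C}$. *)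

From HB Require Import structures.
From mathcomp Require Import all_boot all_order all_algebra.
From mathcomp Require Import Rstruct complex.
From Stdlib Require Rdefinitions.
Set Implicit Arguments. Unset Strict Implicit. Unset Printing Implicit Defensive.
Import Order.TTheory GRing.Theory Num.Theory.
Local Open Scope ring_scope.

Notation R := Rdefinitions.R.
Notation C := (R[i]).

Record quat := Quat { q0 : R; q1 : R; q2 : R; q3 : R }.

Definition qzero : quat := Quat 0 0 0 0.
Definition qone : quat := Quat 1 0 0 0.
Definition qI : quat := Quat 0 1 0 0.
Definition qJ : quat := Quat 0 0 1 0.
Definition qK : quat := Quat 0 0 0 1.
Definition qadd (x y : quat) : quat :=
  Quat (q0 x + q0 y) (q1 x + q1 y) (q2 x + q2 y) (q3 x + q3 y).
(* Hamilton product, with i^2 = j^2 = k^2 = -1, ij = -ji = k. *)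
Definition qmul (x y : quat) : quat :=
  Quat (q0 x * q0 y - q1 x * q1 y - q2 x * q2 y - q3 x * q3 y)
       (q0 x * q1 y + q1 x * q0 y + q2 x * q3 y - q3 x * q2 y)
       (q0 x * q2 y - q1 x * q3 y + q2 x * q0 y + q3 x * q1 y)
       (q0 x * q3 y + q1 x * q2 y - q2 x * q1 y + q3 x * q0 y).
Definition qnorm2 (x : quat) : R := q0 x ^+ 2 + q1 x ^+ 2 + q2 x ^+ 2 + q3 x ^+ 2.
Definition qinv (x : quat) : quat :=
  let n := qnorm2 x in Quat (q0 x / n) (- q1 x / n) (- q2 x / n) (- q3 x / n).
Fixpoint qpow (x : quat) (m : nat) : quat :=
  if m is m'.+1 then qmul (qpow x m') x else qone.

Definition qofR (r : R) : quat := Quat r 0 0 0.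
Definition qofC (z : C) : quat := Quat (complex.Re z) (complex.Im z) 0 0.

(* [q] = { a q a^-1 : a in H, a <> 0 } *)
Definition qsimilar (q x : quat) : Prop :=
  exists a : quat, a <> qzero /\ x = qmul (qmul a q) (qinv a).

(* Decomposition q = a + b j with a, b in C:
   q0 + q1 i + q2 j + q3 k = (q0 + q1 i) + (q2 + q3 i) j. *)
Definition qa (q : quat) : C := Complex (q0 q) (q1 q).
Definition qb (q : quat) : C := Complex (q2 q) (q3 q).

(* p(x) = p_n x^n + ... + p_1 x + d0 (coefficients on the left) *)
Definition qpoly_eval (n : nat) (p : nat -> quat) (d0 : R) (x : quat) : quat :=
  foldr qadd (qofR d0) [seq qmul (p i) (qpow x i) | i <- iota 1 n].

(* p(t) = f1(t) + f2(t) j for real t *)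
Definition f1 (n : nat) (p : nat -> quat) (d0 : R) : {poly C} :=
  (d0%:C)%C%:P + \sum_(1 <= i < n.+1) (qa (p i))%:P * 'X^i.
Definition f2 (n : nat) (p : nat -> quat) : {poly C} :=
  \sum_(1 <= i < n.+1) (qb (p i))%:P * 'X^i.

Definition conjp (h : {poly C}) : {poly C} := map_poly (fun z : C => z^*) h.

Definition gtilde (g1 g2 : {poly C}) : {poly C} := g1 * conjp g1 + g2 * conjp g2.

Definition omega (g1 g2 : {poly C}) (eta : C) : quat :=
  let u := g1.[eta^*] in let v := g2.[eta^*] in
  qmul (qofC ((`|u| ^+ 2 + `|v| ^+ 2)^-1))
    (qadd (qadd (qofC (`|v| ^+ 2 * eta^*)) (qofC (`|u| ^+ 2 * eta)))
          (qmul (qofC (2 * v * u^* * 'Im eta)) qK)).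

From HB Require Import structures.
From mathcomp Require Import all_boot all_order all_algebra.
From mathcomp Require Import Rstruct complex.
From mathcomp Require Import ring lra.
From Stdlib Require Rdefinitions.
Import Order.TTheory GRing.Theory Num.Theory.

Set Implicit Arguments.
Unset Strict Implicit.
Local Open Scope ring_scope.

(* Write x = c + d j with c, d complex and let z, z' = conj z be the complex roots
   of the characteristic polynomial t^2 - 2 Re(x) t + |x|^2 of x ([qchar]); they
   determine the class [x].  Every power x^m equals A_m + B_m x with the same reals
   A_m, B_m as z^m = A_m + B_m z, so p(x) is an explicit combination of f1, f2 at z
   and z'; with f_i = g g_i this reads
     (z - z') p(x) = g(z) phi(x, z) - g(z') phi(x, z'),
   where phi(x, w) is (g1(w), g2(w)) transformed by a singular matrix whose image is
   cut out by the same linear forms for w = z and w = z'.  Hence, for nonreal z: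
   if g(z) = g(z') = 0 the whole class [z] consists of zeros; if only g(z) = 0,
   then phi(x, z') = 0, which pins x down to omega(z); if neither vanishes, phi
   vanishes at both roots, so again x = omega(z), and p(omega(z)), being
   proportional to g(z) g~(z), forces g~(z) = 0. *)

Lemma conjC_real (r : R) : (r%:C)%C^* = (r%:C)%C :> C.
Proof. exact: conjc_real. Qed.

Lemma Im_conj_neq0 (z : C) : complex.Im z != 0 -> complex.Im z^* != 0.
Proof. by case: z => a b; rewrite /= oppr_eq0. Qed.

Lemma subr_conj_eq0 (z : C) : (z - z^* == 0) = (complex.Im z == 0).
Proof. by case: z => a b; rewrite /= eq_complex /=; simpc; apply/eqP/eqP; lra. Qed.

Lemma qaD x y : qa (qadd x y) = qa x + qa y. Proof. by []. Qed.
Lemma qbD x y : qb (qadd x y) = qb x + qb y. Proof. by []. Qed.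

Lemma qaM x y : qa (qmul x y) = qa x * qa y - qb x * (qb y)^*.
Proof.
case: x y => [x0 x1 x2 x3] [y0 y1 y2 y3].
by rewrite /qa /qb /qmul /=; simpc; congr Complex; ring.
Qed.

Lemma qbM x y : qb (qmul x y) = qa x * qb y + qb x * (qa y)^*.
Proof.
case: x y => [x0 x1 x2 x3] [y0 y1 y2 y3].
by rewrite /qa /qb /qmul /=; simpc; congr Complex; ring.
Qed.

Lemma qa_qofR r : qa (qofR r) = (r%:C)%C. Proof. by []. Qed.
Lemma qb_qofR r : qb (qofR r) = 0. Proof. by []. Qed.
Lemma qa_qofC z : qa (qofC z) = z. Proof. by case: z. Qed.
Lemma qb_qofC z : qb (qofC z) = 0. Proof. by []. Qed.
Lemma qa_qK : qa qK = 0. Proof. by []. Qed.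
Lemma qb_qK : qb qK = 'i%C. Proof. by []. Qed.

Lemma quat_ab_inj x y : qa x = qa y -> qb x = qb y -> x = y.
Proof. by case: x y => [? ? ? ?] [? ? ? ?] [-> ->] [-> ->]. Qed.

Lemma quat_eq0 x : qa x = 0 -> qb x = 0 -> x = qzero.
Proof. by move=> ha hb; apply: (@quat_ab_inj x qzero); rewrite ?ha ?hb. Qed.

Lemma qa_trace x : qa x + (qa x)^* = (2 * q0 x)%:C%C.
Proof. by case: x => x0 x1 x2 x3; rewrite /qa /=; simpc; congr Complex; ring. Qed.

Lemma qa_norm x : qa x * (qa x)^* + qb x * (qb x)^* = (qnorm2 x)%:C%C.
Proof.
by case: x => x0 x1 x2 x3; rewrite /qa /qb /qnorm2 /=; simpc; congr Complex; ring.
Qed.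

Lemma qnorm2_neq0 a : a <> qzero -> qnorm2 a != 0.
Proof.
case: a => a0 a1 a2 a3 ha; apply/eqP; rewrite /qnorm2 /= => h; apply: ha.
have h0 : a0 = 0 by nra.
have h1 : a1 = 0 by nra.
have h2 : a2 = 0 by nra.
have h3 : a3 = 0 by nra.
by rewrite h0 h1 h2 h3.
Qed.

Lemma qmulVr x a : a <> qzero -> qmul (qmul x a) (qinv a) = x.
Proof.
move/qnorm2_neq0; case: a x => a0 a1 a2 a3 [x0 x1 x2 x3].
by rewrite /qnorm2 /= => hn; rewrite /qmul /qinv /qnorm2 /=; congr Quat; field.
Qed.

Definition qchar (x : quat) (w : C) : C :=
  (w - qa x) * (w - (qa x)^*) + qb x * (qb x)^*.

Lemma qcharE x w : qchar x w = w ^+ 2 - (2 * q0 x)%:C%C * w + (qnorm2 x)%:C%C.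
Proof.
case: x w => [x0 x1 x2 x3] [a b].
by rewrite /qchar /qa /qb /qnorm2 /=; simpc; congr Complex; ring.
Qed.

Lemma qcharP x z : qchar x z = 0 <->
  q0 x = complex.Re z /\ q1 x ^+ 2 + q2 x ^+ 2 + q3 x ^+ 2 = complex.Im z ^+ 2.
Proof.
case: x z => [x0 x1 x2 x3] [a b] /=.
rewrite /qchar /qa /qb /=; simpc; split; last by case=> <- hs; congr Complex; nra.
case=> hre him.
have hb : b * (a - x0) = 0 by nra.
have ha : a = x0.
  move/eqP: hb; rewrite mulf_eq0 => /orP[/eqP b0|]; last by rewrite subr_eq0 => /eqP.
  by move: hre; rewrite b0; nra.
by split; [|move: hre; rewrite ha]; nra.
Qed.

Lemma qchar_conj x z : qchar x z = 0 -> qchar x z^* = 0.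
Proof. by case: z => a b; rewrite !qcharP /= sqrrN. Qed.

Lemma qchar_trace x z : qchar x z = 0 -> (qa x)^* = z + z^* - qa x.
Proof.
case: x z => [x0 x1 x2 x3] [a b]; rewrite qcharP /= => -[-> _].
by rewrite /qa /=; simpc; congr Complex; ring.
Qed.

Lemma qchar_root_eq x w z : qchar x w = 0 -> qchar x z = 0 -> w = z \/ w = z^*.
Proof.
case: w z => [a b] [c d]; rewrite !qcharP /= => -[-> hb] [-> hd].
have /orP[/eqP ->|/eqP ->] : (b == d) || (b == - d) by rewrite -eqf_sqr -hb -hd.
  by left.
by right.
Qed.

Lemma qchar_qofR r : qchar (qofR r) (r%:C)%C = 0.
Proof. by rewrite qcharP /= expr0n /= !addr0. Qed.

Lemma qchar_real x r : qchar x (r%:C)%C = 0 -> x = qofR r.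
Proof.
case: x => x0 x1 x2 x3; rewrite qcharP /= expr0n /= => -[-> hs].
have h1 : x1 = 0 by nra.
have h2 : x2 = 0 by nra.
have h3 : x3 = 0 by nra.
by rewrite h1 h2 h3.
Qed.

Lemma qchar_exists x : exists z, qchar x z = 0.
Proof.
have hs : 0 <= q1 x ^+ 2 + q2 x ^+ 2 + q3 x ^+ 2 by nra.
exists (q0 x +i* Num.sqrt (q1 x ^+ 2 + q2 x ^+ 2 + q3 x ^+ 2))%C.
by rewrite qcharP /= sqr_sqrtr.
Qed.

Lemma qsimilarP z x : qsimilar (qofC z) x <-> qchar x z = 0.
Proof.
rewrite qcharP; split.
  case=> a [/qnorm2_neq0 + ->].
  case: a z => a0 a1 a2 a3 [l0 l1]; rewrite /qnorm2 /= => ha.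
  by split; rewrite /qmul /qinv /qnorm2 /=; field.
case: z x => l0 l1 [x0 x1 x2 x3] /= [-> hs].
have [/and3P[/eqP h1 /eqP -> /eqP ->]|hne] :=
  boolP [&& l1 + x1 == 0, x2 == 0 & x3 == 0].
  exists qJ; split; first by case=> /eqP; rewrite oner_eq0.
  have -> : x1 = - l1 by apply/eqP; rewrite -subr_eq0 opprK addrC h1.
  by rewrite /qmul /qinv /qnorm2 /qJ /qofC /=; congr Quat; field.
pose a := Quat 0 (l1 + x1) x2 x3.
have ha : a <> qzero.
  move=> ha0; have : qnorm2 a = 0 by rewrite ha0 /qnorm2 /= expr0n /= !addr0.
  rewrite /a /qnorm2 /= => h.
  have e1 : l1 + x1 = 0 by nra.
  have e2 : x2 = 0 by nra.
  have e3 : x3 = 0 by nra.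
  by move: hne; rewrite e1 e2 e3 !eqxx.
exists a; split=> //.
have -> : qmul a (qofC (l0 +i* l1)%C) = qmul (Quat l0 x1 x2 x3) a.
  by rewrite /a /qmul /qofC /=; congr Quat; nra.
by rewrite qmulVr.
Qed.

(* [pow_rem s N m = (A, B)] when [t ^ m = A + B t] modulo [t ^ 2 - s t + N]. *)
Fixpoint pow_rem (s N : R) (m : nat) : R * R :=
  if m is m'.+1 then let r := pow_rem s N m' in (- N * r.2, r.1 + s * r.2)
  else (1, 0).

Lemma qpow_rem x m : let r := pow_rem (2 * q0 x) (qnorm2 x) m in
  qa (qpow x m) = (r.1)%:C%C + (r.2)%:C%C * qa x /\
  qb (qpow x m) = (r.2)%:C%C * qb x.
Proof.
have := qa_trace x; have := qa_norm x.
move: (2 * q0 x) (qnorm2 x) => s N hN hs.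
elim: m => [|m IH] /=; first by split; simpc.
move: (pow_rem s N m) IH => [A B] /= [IHa IHb].
rewrite qaM qbM IHa IHb !(rmorphN, rmorphD, rmorphM) /= -hs -hN.
by split; ring.
Qed.

Lemma exprn_pow_rem (w : C) (s N : R) m : w ^+ 2 = (s%:C)%C * w - (N%:C)%C ->
  w ^+ m = ((pow_rem s N m).1)%:C%C + ((pow_rem s N m).2)%:C%C * w.
Proof.
move=> hw; elim: m => [|m IH] /=; first by rewrite expr0 mul0r addr0.
rewrite exprSr IH mulrDl -mulrA -expr2 hw !(rmorphN, rmorphD, rmorphM) /=.
ring.
Qed.

Lemma qpoly_eval_lin n p d0 x : exists al0 al1 be0 be1 : C,
  [/\ qa (qpoly_eval n p d0 x) = al0 + al1 * qa x - be1 * (qb x)^*,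
      qb (qpoly_eval n p d0 x) = be0 + al1 * qb x + be1 * (qa x)^* &
      forall w, qchar x w = 0 ->
        (f1 n p d0).[w] = al0 + al1 * w /\ (f2 n p).[w] = be0 + be1 * w].
Proof.
pose A i := ((pow_rem (2 * q0 x) (qnorm2 x) i).1)%:C%C.
pose B i := ((pow_rem (2 * q0 x) (qnorm2 x) i).2)%:C%C.
exists ((d0%:C)%C + \sum_(i <- iota 1 n) A i * qa (p i)),
  (\sum_(i <- iota 1 n) B i * qa (p i)), (\sum_(i <- iota 1 n) A i * qb (p i)),
  (\sum_(i <- iota 1 n) B i * qb (p i)).
split.
- rewrite /qpoly_eval; elim: (iota 1 n) => [|i l IH] /=; first by rewrite !big_nil; simpc.
  rewrite !big_cons qaD qaM IH.
  have [-> ->] := qpow_rem x i; rewrite -/(A i) -/(B i).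
  by rewrite !(rmorphD, rmorphM) /= conjC_real; ring.
- rewrite /qpoly_eval; elim: (iota 1 n) => [|i l IH] /=; first by rewrite !big_nil; simpc.
  rewrite !big_cons qbD qbM IH.
  have [-> ->] := qpow_rem x i; rewrite -/(A i) -/(B i).
  by rewrite !(rmorphD, rmorphM) /= !conjC_real; ring.
- move=> w hq.
  have hw : w ^+ 2 = (2 * q0 x)%:C%C * w - (qnorm2 x)%:C%C.
    by apply/eqP; rewrite -subr_eq0; apply/eqP; rewrite -[RHS]hq qcharE; ring.
  have hl : index_iota 1 n.+1 = iota 1 n by rewrite /index_iota subSS subn0.
  rewrite /f1 /f2 hl !hornerE !horner_sum.
  under eq_bigr do rewrite hornerCM hornerXn (exprn_pow_rem _ hw) -/(A _) -/(B _).
  under [in X in _ /\ X]eq_bigr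
    do rewrite hornerCM hornerXn (exprn_pow_rem _ hw) -/(A _) -/(B _).
  rewrite !mulr_suml -!addrA -!big_split /=.
  by split; [congr (_ + _)|]; apply: eq_bigr => i _; ring.
Qed.

Lemma qpoly_eval_qofR n p d0 r :
  qa (qpoly_eval n p d0 (qofR r)) = (f1 n p d0).[(r%:C)%C] /\
  qb (qpoly_eval n p d0 (qofR r)) = (f2 n p).[(r%:C)%C].
Proof.
have [al0 [al1 [be0 [be1 [-> -> /(_ _ (qchar_qofR r))[-> ->]]]]]] :=
  qpoly_eval_lin n p d0 (qofR r).
by rewrite qa_qofR qb_qofR conjC_real rmorph0; split; ring.
Qed.

Lemma qpoly_eval_interp n p d0 x z : qchar x z = 0 ->
  let c := qa x in let d := qb x in
  let F1 := f1 n p d0 in let F2 := f2 n p in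
  (z - z^*) * qa (qpoly_eval n p d0 x) =
    (z - c^*) * F1.[z] - (z^* - c^*) * F1.[z^*] - (F2.[z] - F2.[z^*]) * d^* /\
  (z - z^*) * qb (qpoly_eval n p d0 x) =
    (z - c) * F2.[z] - (z^* - c) * F2.[z^*] + (F1.[z] - F1.[z^*]) * d.
Proof.
move=> hq /=; have [al0 [al1 [be0 [be1 [-> -> hlin]]]]] := qpoly_eval_lin n p d0 x.
have [-> ->] := hlin _ hq; have [-> ->] := hlin _ (qchar_conj hq).
by rewrite (qchar_trace hq); split; ring.
Qed.

Lemma conjp_horner (h : {poly C}) (w : C) : (conjp h).[w] = (h.[w^*])^*.
Proof. by rewrite /conjp -{1}[w]conjCK horner_map. Qed.

Lemma gtilde_horner (g1 g2 : {poly C}) (w : C) :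
  (gtilde g1 g2).[w] = g1.[w] * (g1.[w^*])^* + g2.[w] * (g2.[w^*])^*.
Proof. by rewrite /gtilde hornerD !hornerM !conjp_horner. Qed.

Lemma coprimep_sqnorm_neq0 (g1 g2 : {poly C}) (w : C) : coprimep g1 g2 ->
  g1.[w] * (g1.[w])^* + g2.[w] * (g2.[w])^* != 0.
Proof.
move=> hcop; rewrite -!normCK paddr_eq0 ?exprn_ge0 // !sqrf_eq0 !normr_eq0.
by apply/nandP; case: (boolP (root g1 w)) => [/(coprimep_root hcop)|]; [right|left].
Qed.

Lemma gtilde_root_nonreal (g1 g2 : {poly C}) (eta : C) : coprimep g1 g2 ->
  root (gtilde g1 g2) eta -> complex.Im eta != 0.
Proof.
move=> hcop; apply: contraL => /eqP him.
have -> : eta = ((complex.Re eta)%:C)%C by case: eta him => a b /= ->.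
by rewrite /root gtilde_horner conjC_real coprimep_sqnorm_neq0.
Qed.

Lemma qa_omega g1 g2 z : let u := g1.[z^*] in let v := g2.[z^*] in
  qa (omega g1 g2 z) = (v * v^* * z^* + u * u^* * z) / (u * u^* + v * v^*).
Proof.
rewrite /omega /= qaM qa_qofC qb_qofC !qaD qa_qofC !qaM !qa_qofC !qb_qofC qb_qK.
by rewrite qa_qK !normCK; ring.
Qed.

Lemma qb_omega g1 g2 z : let u := g1.[z^*] in let v := g2.[z^*] in
  qb (omega g1 g2 z) = (z - z^*) * v * u^* / (u * u^* + v * v^*).
Proof.
rewrite /omega /= qbM qa_qofC qb_qofC !qbD !qbM !qa_qofC !qb_qofC qb_qK.
by rewrite !normCK subcJ complexIm; ring.
Qed.

Section Phi.
Variables g1 g2 : {poly C}.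

(* [(phi1 x w, phi2 x w)] is [(g1.[w], g2.[w])] multiplied by the matrix
   [[w - c^*, - d^*], [d, w - c]] of determinant [qchar x w], where x = c + d j. *)
Definition phi1 (x : quat) (w : C) : C := (w - (qa x)^*) * g1.[w] - g2.[w] * (qb x)^*.
Definition phi2 (x : quat) (w : C) : C := (w - qa x) * g2.[w] + g1.[w] * qb x.

Lemma phi_annihilated x w : qchar x w = 0 ->
  (w - qa x) * phi1 x w + (qb x)^* * phi2 x w = 0 /\
  (w - (qa x)^*) * phi2 x w - qb x * phi1 x w = 0.
Proof.
move=> hq; rewrite /phi1 /phi2.
have -> : (w - qa x) * ((w - (qa x)^*) * g1.[w] - g2.[w] * (qb x)^*) +
    (qb x)^* * ((w - qa x) * g2.[w] + g1.[w] * qb x) = qchar x w * g1.[w].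
  by rewrite /qchar; ring.
have -> : (w - (qa x)^*) * ((w - qa x) * g2.[w] + g1.[w] * qb x) -
    qb x * ((w - (qa x)^*) * g1.[w] - g2.[w] * (qb x)^*) = qchar x w * g2.[w].
  by rewrite /qchar; ring.
by rewrite hq !mul0r.
Qed.

Hypothesis hcop : coprimep g1 g2.

Section OmegaAt.
Variable z : C.
Let u := g1.[z^*].
Let v := g2.[z^*].
Let D := u * u^* + v * v^*.

Let hD : u * u^* + v * v^* != 0.
Proof. exact: coprimep_sqnorm_neq0. Qed.

Let hDc : u^* * u + v^* * v != 0.
Proof. by rewrite mulrC [v^* * _]mulrC hD. Qed.

Lemma qchar_omega : qchar (omega g1 g2 z) z = 0.
Proof.
rewrite /qchar qa_omega qb_omega -/u -/v.
rewrite !(rmorphD, rmorphN, rmorphB, rmorphM, fmorphV) /= !conjCK.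
by field; solve [exact: hD | exact: hDc].
Qed.

Lemma phi_omega_conj : phi1 (omega g1 g2 z) z^* = 0 /\ phi2 (omega g1 g2 z) z^* = 0.
Proof.
rewrite /phi1 /phi2 qa_omega qb_omega -/u -/v.
rewrite !(rmorphD, rmorphN, rmorphB, rmorphM, fmorphV) /= !conjCK.
by split; field; solve [exact: hD | exact: hDc].
Qed.

Lemma phi_omega : let gt := (gtilde g1 g2).[z] in
  phi1 (omega g1 g2 z) z = (z - z^*) * u * gt / D /\
  phi2 (omega g1 g2 z) z = (z - z^*) * v * gt / D.
Proof.
rewrite /= gtilde_horner /phi1 /phi2 qa_omega qb_omega -/u -/v /D.
rewrite !(rmorphD, rmorphN, rmorphB, rmorphM, fmorphV) /= !conjCK.
by split; field; solve [exact: hD | exact: hDc].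
Qed.

Lemma phi_conj_eq0_omega x : qchar x z = 0 ->
  phi1 x z^* = 0 -> phi2 x z^* = 0 -> x = omega g1 g2 z.
Proof.
move=> /qchar_trace hc; rewrite /phi1 /phi2 -/u -/v.
set c := qa x; set d := qb x; rewrite -/c in hc.
move=> /eqP; set P1 := (X in X == 0) => /eqP h1.
move=> /eqP; set P2 := (X in X == 0) => /eqP h2.
have /eqP : P1^* = 0 by rewrite h1 rmorph0.
set P1c := (X in X == 0) => /eqP h1c.
have /eqP : P2^* = 0 by rewrite h2 rmorph0.
set P2c := (X in X == 0) => /eqP h2c.
apply: quat_ab_inj; rewrite ?qa_omega ?qb_omega -/u -/v;
  apply: (mulIf hD); rewrite divfK //; apply/eqP; rewrite -subr_eq0; apply/eqP.
  have -> : c * (u * u^* + v * v^*) - (v * v^* * z^* + u * u^* * z) =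
      u^* * P1 + v * P2c.
    by rewrite /P1 /P2c !(rmorphD, rmorphN, rmorphB, rmorphM) /= !conjCK hc; ring.
  by rewrite h1 h2c; ring.
have -> : d * (u * u^* + v * v^*) - (z - z^*) * v * u^* = u^* * P2 - v * P1c.
  by rewrite /P2 /P1c !(rmorphD, rmorphN, rmorphB, rmorphM) /= !conjCK; ring.
by rewrite h2 h1c; ring.
Qed.
End OmegaAt.
End Phi.

Definition isolated_zero (g g1 g2 : {poly C}) (x : quat) : Prop :=
  (exists xi : R, root g (xi%:C)%C /\ x = qofR xi) \/
  (exists eta : C,
      ((complex.Im eta != 0 /\ root g eta /\ ~~ root g eta^*) \/
       (root (gtilde g1 g2) eta /\ ~~ root g eta /\ ~~ root g eta^*)) /\
      x = omega g1 g2 eta).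

Definition spherical_zero (g : {poly C}) (x : quat) : Prop :=
  exists lam : C, complex.Im lam != 0 /\ root g lam /\ root g lam^* /\
                  qsimilar (qofC lam) x.

Section Factored.
Variables (n : nat) (p : nat -> quat) (d0 : R) (g g1 g2 : {poly C}).
Hypotheses (hf1 : f1 n p d0 = g * g1) (hf2 : f2 n p = g * g2).
Hypothesis hcop : coprimep g1 g2.

Local Notation P := (qpoly_eval n p d0).

Lemma qpoly_eval_phi x z : qchar x z = 0 ->
  (z - z^*) * qa (P x) = g.[z] * phi1 g1 g2 x z - g.[z^*] * phi1 g1 g2 x z^* /\
  (z - z^*) * qb (P x) = g.[z] * phi2 g1 g2 x z - g.[z^*] * phi2 g1 g2 x z^*.
Proof.
move=> /(qpoly_eval_interp n p d0) /= [-> ->].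
by rewrite hf1 hf2 !hornerM /phi1 /phi2; split; ring.
Qed.

Lemma qpoly_eval_qofR_eq0 r : P (qofR r) = qzero <-> root g (r%:C)%C.
Proof.
have [ha hb] := qpoly_eval_qofR n p d0 r; rewrite hf1 hf2 !hornerM in ha hb.
split=> [hP | /eqP hg]; last by apply: quat_eq0; rewrite ?ha ?hb hg mul0r.
move: ha hb; rewrite hP => /esym/eqP + /esym/eqP.
rewrite !mulf_eq0 => /orP[// | h1] /orP[// | h2].
by have := coprimep_root hcop h1; rewrite /root h2.
Qed.

Lemma qpoly_eval_class x z : complex.Im z != 0 -> root g z -> root g z^* ->
  qchar x z = 0 -> P x = qzero.
Proof.
rewrite -subr_conj_eq0 => hz /eqP hg /eqP hg' /qpoly_eval_phi[e1 e2].
rewrite hg hg' !mul0r subr0 in e1 e2.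
by apply: quat_eq0; apply: (mulfI hz); rewrite mulr0.
Qed.

Lemma qpoly_eval_omega z : complex.Im z != 0 ->
  P (omega g1 g2 z) = qzero <-> g.[z] * (gtilde g1 g2).[z] = 0.
Proof.
rewrite -subr_conj_eq0 => hz.
have [e1 e2] := qpoly_eval_phi (qchar_omega hcop z).
have [c1 c2] := phi_omega_conj hcop z; have [o1 o2] := phi_omega hcop z.
rewrite c1 c2 o1 o2 !mulr0 !subr0 in e1 e2.
move: (coprimep_sqnorm_neq0 z^* hcop) e1 e2.
set u := g1.[z^*]; set v := g2.[z^*]; set D := u * _ + _ => hD e1 e2.
have {}e1 : qa (P (omega g1 g2 z)) = g.[z] * (gtilde g1 g2).[z] * u / D.
  by apply: (mulfI hz); rewrite e1; ring.
have {}e2 : qb (P (omega g1 g2 z)) = g.[z] * (gtilde g1 g2).[z] * v / D.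
  by apply: (mulfI hz); rewrite e2; ring.
split=> [hP | hk]; last by apply: quat_eq0; rewrite ?e1 ?e2 hk !mul0r.
apply/eqP/negPn/negP => hk; move: e1 e2; rewrite hP => /esym/eqP + /esym/eqP.
rewrite !(mulf_eq0 _ D^-1) invr_eq0 (negbTE hD) !orbF.
rewrite (mulf_eq0 _ u) (mulf_eq0 _ v) (negbTE hk) /= => /eqP hu /eqP hv.
by move: hD; rewrite /D hu hv !mul0r addr0 eqxx.
Qed.

Lemma qpoly_root_phi_eq0 x z : z - z^* != 0 -> qchar x z = 0 ->
  g.[z] != 0 -> g.[z^*] != 0 -> P x = qzero ->
  [/\ phi1 g1 g2 x z = 0, phi2 g1 g2 x z = 0,
      phi1 g1 g2 x z^* = 0 & phi2 g1 g2 x z^* = 0].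
Proof.
move=> hz hq hG hG' hP.
have [a1 b1] := phi_annihilated g1 g2 hq.
have [a2 b2] := phi_annihilated g1 g2 (qchar_conj hq).
have [E1 E2] := qpoly_eval_phi hq; rewrite hP mulr0 in E1 E2.
move: a1 b1 a2 b2 E1 E2.
set c := qa x; set d := qb x; set G := g.[z]; set G' := g.[z^*].
set u := phi1 g1 g2 x z; set v := phi2 g1 g2 x z.
set u' := phi1 g1 g2 x z^*; set v' := phi2 g1 g2 x z^* => a1 b1 a2 b2 E1 E2.
(* The forms annihilating phi at z and at conj z differ by z - conj z in one slot. *)
have hu : G * (z - z^*) * u = 0.
  have -> : G * (z - z^*) * u = G * ((z - c) * u + d^* * v)
      - G' * ((z^* - c) * u' + d^* * v') - (z^* - c) * (G * u - G' * u')
      - d^* * (G * v - G' * v') by ring.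
  by rewrite a1 a2 -E1 -E2; ring.
have hv : G * (z - z^*) * v = 0.
  have -> : G * (z - z^*) * v = G * ((z - c^*) * v - d * u)
      - G' * ((z^* - c^*) * v' - d * u') - (z^* - c^*) * (G * v - G' * v')
      + d * (G * u - G' * u') by ring.
  by rewrite b1 b2 -E1 -E2; ring.
have hGz : G * (z - z^*) != 0 by rewrite mulf_neq0.
have u0 : u = 0 by apply: (mulfI hGz); rewrite hu mulr0.
have v0 : v = 0 by apply: (mulfI hGz); rewrite hv mulr0.
move: E1 E2; rewrite u0 v0 !mulr0 !sub0r => /esym/eqP + /esym/eqP.
by rewrite !oppr_eq0 !mulf_eq0 (negbTE hG') => /eqP u'0 /eqP v'0.
Qed.

Lemma qpoly_root_omega x z : qchar x z = 0 ->
  g.[z] = 0 -> g.[z^*] != 0 -> P x = qzero -> x = omega g1 g2 z.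
Proof.
move=> hq hG hG' hP; have [E1 E2] := qpoly_eval_phi hq.
rewrite hP hG mulr0 !mul0r !sub0r in E1 E2.
move/esym/eqP: E1; move/esym/eqP: E2.
rewrite !oppr_eq0 !mulf_eq0 (negbTE hG') /= => /eqP h2 /eqP h1.
by move: h1 h2; apply: phi_conj_eq0_omega.
Qed.

Lemma qpoly_root_nonreal x z : complex.Im z != 0 -> qchar x z = 0 ->
  P x = qzero -> isolated_zero g g1 g2 x \/ spherical_zero g x.
Proof.
move=> hIm hq hP; have hz : z - z^* != 0 by rewrite subr_conj_eq0.
have hq' := qchar_conj hq.
case: (eqVneq g.[z] 0) => hG; case: (eqVneq g.[z^*] 0) => hG'.
- by right; exists z; rewrite /root hG hG' qsimilarP.
- left; right; exists z; split; last exact: qpoly_root_omega.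
  by left; rewrite /root hG hG'.
- left; right; exists z^*; split.
    by left; rewrite /root conjCK hG hG' Im_conj_neq0.
  by apply: qpoly_root_omega; rewrite ?conjCK.
- have [_ _ h1 h2] := qpoly_root_phi_eq0 hz hq hG hG' hP.
  have hx := phi_conj_eq0_omega hcop hq h1 h2.
  left; right; exists z; split=> //; right; rewrite /root (negbTE hG) (negbTE hG').
  move: hP; rewrite hx qpoly_eval_omega // => /eqP.
  by rewrite mulf_eq0 (negbTE hG).
Qed.

Lemma qpoly_root_cases x :
  P x = qzero -> isolated_zero g g1 g2 x \/ spherical_zero g x.
Proof.
move=> hP; have [z hq] := qchar_exists x.
have [hIm|] := eqVneq (complex.Im z) 0; last by move/qpoly_root_nonreal; apply.
have hz : z = ((complex.Re z)%:C)%C by case: z hq hIm => a b _ /= ->.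
have hx := qchar_real (etrans (congr1 (qchar x) (esym hz)) hq).
by left; left; exists (complex.Re z); split=> //; apply/qpoly_eval_qofR_eq0; rewrite -hx.
Qed.

Lemma isolated_zero_root x : isolated_zero g g1 g2 x -> P x = qzero.
Proof.
case=> [[xi [hr ->]] | [eta [hcase ->]]]; first exact/qpoly_eval_qofR_eq0.
have hIm : complex.Im eta != 0.
  by case: hcase => [[]|[/(gtilde_root_nonreal hcop)]].
apply/qpoly_eval_omega => //; apply/eqP; rewrite mulf_eq0.
by case: hcase => [[_ [/rootP -> _]] | [/rootP -> _]]; rewrite eqxx ?orbT.
Qed.

Lemma spherical_zero_root x : spherical_zero g x -> P x = qzero.
Proof. by case=> lam [hl [r1 [r2 /qsimilarP]]]; apply: qpoly_eval_class. Qed.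
End Factored.

Lemma isolated_not_spherical (g g1 g2 : {poly C}) x : coprimep g1 g2 ->
  isolated_zero g g1 g2 x -> ~ spherical_zero g x.
Proof.
move=> hcop hiso [lam [hl [r1 [r2 /qsimilarP hs]]]].
case: hiso => [[xi [_ hx]] | [eta [hcase hx]]]; rewrite hx in hs.
  have [hlam|hlam] := qchar_root_eq hs (qchar_qofR xi); move: hl;
    by rewrite hlam ?conjC_real eqxx.
have [hlam|hlam] := qchar_root_eq hs (qchar_omega hcop eta); move: r1 r2;
  by rewrite hlam ?conjCK => r1 r2; case: hcase => [[_ []]|[_ []]]; rewrite ?r1 ?r2.
Qed.

Theorem theorem4 (n : nat) (p : nat -> quat) (d0 : R)
  (hn : (0 < n)%N) (hpn : p n <> qzero) (hd0 : d0 = 0 \/ d0 = 1)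
  (g g1 g2 : {poly C})
  (hf1 : f1 n p d0 = g * g1) (hf2 : f2 n p = g * g2)
  (hcop : coprimep g1 g2) :
  let finite_part (x : quat) : Prop :=
    (exists xi : R, root g (xi%:C)%C /\ x = qofR xi) \/
    (exists eta : C,
        ((complex.Im eta != 0 /\ root g eta /\ ~~ root g eta^*) \/
         (root (gtilde g1 g2) eta /\ ~~ root g eta /\ ~~ root g eta^*)) /\
        x = omega g1 g2 eta) in
  let classes_part (x : quat) : Prop :=
    exists lam : C, complex.Im lam != 0 /\ root g lam /\ root g lam^* /\
                    qsimilar (qofC lam) x in
  (forall x : quat, qpoly_eval n p d0 x = qzero <-> finite_part x \/ classes_part x)
  /\ (forall x : quat, finite_part x -> ~ classes_part x).
Proof.
move=> finite_part classes_part; split=> x; last exact: isolated_not_spherical hcop.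
split=> [|[]]; first exact: qpoly_root_cases hf1 hf2 hcop x.
  exact: isolated_zero_root hf1 hf2 hcop x.
exact: spherical_zero_root hf1 hf2 x.
Qed.
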